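(* Let $V$ be a complex vector space with inner products $\langle\cdot,\cdot\rangle_1,\langle\cdot,\cdot\rangle_2$ and induced norms $\|\cdot\|_1,\|\cdot\|_2$. Suppose at least one of the following holds: (1) $\langle\cdot,\cdot\rangle_2=c\langle\cdot,\cdot\rangle_1$ for some $c>0$; (2) $\|\cdot\|_2=c\|\cdot\|_1$ for some $c>0$; (3) the two inner products give the same angle between every pair of nonzero vectors; (4) for all nonzero $x,y$, $\mathrm{Re}\langle x,y\rangle_1=0\iff\mathrm{Re}\langle x,y\rangle_2=0$; (5) for all $x,y$, $\langle x,y\rangle_1=0\iff\langle x,y\rangle_2=0$; (6) for some $\theta_0\in(0,\pi)$, for all nonzero $x,y$ the angle between $x,y$ with respect to $\langle\cdot,\cdot\rangle_1$ is $\theta_0$ iff it is $\theta_0$ with respect to $\langle\cdot,\cdot\rangle_2$. If moreover there is a nonzero $x\in V$ with $\|x\|_1=\|x\|_2$, then $\langle\cdot,\cdot\rangle_1=\langle\cdot,\cdot\rangle_2$.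
   Context: Inner products are linear in the first argument and conjugate-linear in the second, with norm $\|x\|=\sqrt{\langle x,x\rangle}$. The angle between nonzero vectors $x,y$ of a complex inner product space is the unique $\theta\in[0,\pi]$ with $\cos\theta=\mathrm{Re}\,\langle x,y\rangle/(\|x\|\|y\|)$. *)

From HB Require Import structures.
From mathcomp Require Import all_boot all_order all_algebra.
From mathcomp Require Import complex.
From mathcomp Require Import reals trigo.
Set Implicit Arguments. Unset Strict Implicit. Unset Printing Implicit Defensive.
Import Order.TTheory GRing.Theory Num.Theory.
Local Open Scope ring_scope.

Definition is_inner_product (R : realType) (V : lmodType R[i]) (ip : V -> V -> R[i]) : Prop :=
  [/\ (forall (a : R[i]) (x y z : V), ip (a *: x + y) z = a * ip x z + ip y z),
      (forall x y : V, ip y x = conjc (ip x y)) &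
      (forall x : V, x != 0 -> 0 < ip x x)].

Definition ipnorm (R : realType) (V : lmodType R[i]) (ip : V -> V -> R[i]) (x : V) : R :=
  Num.sqrt (complex.Re (ip x x)).

Definition ipangle (R : realType) (V : lmodType R[i]) (ip : V -> V -> R[i]) (x y : V) : R :=
  acos (complex.Re (ip x y) / (ipnorm ip x * ipnorm ip y)).

From HB Require Import structures.
From mathcomp Require Import all_boot all_order all_algebra.
From mathcomp Require Import complex.
From mathcomp Require Import reals trigo.
From mathcomp Require Import ring lra.
Import Order.TTheory GRing.Theory Num.Theory.
Local Open Scope ring_scope.
Set Implicit Arguments. Unset Strict Implicit.

(* Each hypothesis implies that <.,.>_2 preserves real-orthogonality of nonzero
   vectors, and replacing y by i y upgrades this to preservation of
   orthogonality.  If <x,y>_1 = 0 forces <x,y>_2 = 0, then subtracting from y its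
   <.,.>_1-projection on x gives <y,x>_2 = l(x) <y,x>_1 with
   l(x) = <x,x>_2 / <x,x>_1 real; Hermitian symmetry makes l constant on
   non-orthogonal pairs, and going through x + z it is constant everywhere.  A
   nonzero vector of equal norms forces l = 1.
   For the angle condition, fix x, y with Re <x,y>_1 = 0 and tilt x towards +y
   and -y so as to make the <.,.>_1-angle exactly theta0; the two resulting
   equations for the <.,.>_2-angle force Re <x,y>_2 = 0. *)

Local Notation Re := complex.Re.

Lemma Re_realM (R : realType) (a : R) (w : R[i]) : Re ((a%:C)%C * w) = a * Re w.
Proof. by case: w => c d /=; rewrite mul0r subr0. Qed.

(* The additive and multiplicative instances of [conjc] are declared over
   [rcfType]s and are not found for [R : realType] here. *)
Lemma conjcD (R : realType) (a b : R[i]) : conjc (a + b) = conjc a + conjc b.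
Proof. by case: a => ? ?; case: b => ? ? /=; rewrite opprD. Qed.

Lemma conjcM (R : realType) (a b : R[i]) : conjc (a * b) = conjc a * conjc b.
Proof. by case: a => ? ?; case: b => ? ? /=; congr Complex; ring. Qed.

Section InnerProduct.
Variables (R : realType) (V : lmodType R[i]) (ip : V -> V -> R[i]).
Hypothesis ip_inner : is_inner_product ip.

Lemma ipDl x y z : ip (x + y) z = ip x z + ip y z.
Proof. by case: ip_inner => lin _ _; rewrite -[x]scale1r lin mul1r scale1r. Qed.

Lemma ip0l z : ip 0 z = 0.
Proof. by apply: (@addrI _ (ip 0 z)); rewrite -ipDl !addr0. Qed.

Lemma ipZl a x z : ip (a *: x) z = a * ip x z.
Proof. by case: ip_inner => lin _ _; rewrite -[a *: x]addr0 lin ip0l addr0. Qed.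

Lemma ipZDl a x y z : ip (a *: x + y) z = a * ip x z + ip y z.
Proof. by rewrite ipDl ipZl. Qed.

Lemma ip_conj x y : ip y x = conjc (ip x y).
Proof. by case: ip_inner. Qed.

Lemma ip0r z : ip z 0 = 0.
Proof. by rewrite ip_conj ip0l conjc0. Qed.

Lemma ipDr x y z : ip z (x + y) = ip z x + ip z y.
Proof. by rewrite [LHS]ip_conj ipDl conjcD -!ip_conj. Qed.

Lemma ipZr a x z : ip z (a *: x) = conjc a * ip z x.
Proof. by rewrite [LHS]ip_conj ipZl conjcM -ip_conj. Qed.

Lemma ip_diag_real x : ip x x = ((Re (ip x x))%:C)%C.
Proof. by have := ip_conj x x; case: (ip x x) => a b /= [] b0; congr Complex; lra. Qed.

Lemma ip_diag_neq0 x : x != 0 -> ip x x != 0.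
Proof. by case: ip_inner => _ _ pos /pos /gt_eqF ->. Qed.

Lemma Re_ip_diag_gt0 x : x != 0 -> 0 < Re (ip x x).
Proof. by case: ip_inner => _ _ pos /pos; rewrite ltcE => /andP[]. Qed.

Lemma Re_ip_diag_ge0 x : 0 <= Re (ip x x).
Proof. by have [->|/Re_ip_diag_gt0/ltW //] := eqVneq x 0; rewrite ip0l. Qed.

Lemma Re_ip_sym x y : Re (ip y x) = Re (ip x y).
Proof. by rewrite ip_conj; case: (ip x y). Qed.

Lemma Re_ipDl x y z : Re (ip (x + y) z) = Re (ip x z) + Re (ip y z).
Proof. by rewrite ipDl (raddfD (@complex.Re R : Rcomplex R -> R)). Qed.

Lemma Re_ipDr x y z : Re (ip z (x + y)) = Re (ip z x) + Re (ip z y).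
Proof. by rewrite ipDr (raddfD (@complex.Re R : Rcomplex R -> R)). Qed.

Lemma Re_ipZl (a : R) x z : Re (ip ((a%:C)%C *: x) z) = a * Re (ip x z).
Proof. by rewrite ipZl Re_realM. Qed.

Lemma Re_ipZr (a : R) x z : Re (ip z ((a%:C)%C *: x)) = a * Re (ip z x).
Proof. by rewrite ipZr conjc_real Re_realM. Qed.

Definition Re_ipE := (Re_ipDl, Re_ipDr, Re_ipZl, Re_ipZr).

Lemma Re_ip_polarization x y :
  Re (ip x y) = (Re (ip (x + y) (x + y)) - Re (ip x x) - Re (ip y y)) / 2.
Proof. by rewrite !Re_ipE (Re_ip_sym y x); field. Qed.

Lemma ipnorm_sqr x : ipnorm ip x ^+ 2 = Re (ip x x).
Proof. by rewrite sqr_sqrtr ?Re_ip_diag_ge0. Qed.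

Lemma ipnorm_gt0 x : x != 0 -> 0 < ipnorm ip x.
Proof. by move=> x0; rewrite sqrtr_gt0 Re_ip_diag_gt0. Qed.

Lemma Re_ip_CauchySchwarz x y : Re (ip x y) ^+ 2 <= Re (ip x x) * Re (ip y y).
Proof.
have [->|y0] := eqVneq y 0; first by rewrite ip0r ip0l /= expr0n mulr0.
have yy0 := Re_ip_diag_gt0 y0.
pose t := Re (ip x y) / Re (ip y y).
have := Re_ip_diag_ge0 ((- t)%:C%C *: y + x); rewrite !Re_ipE (Re_ip_sym x y).
have -> : - t * (- t * Re (ip y y) + Re (ip x y)) + (- t * Re (ip x y) + Re (ip x x))
          = Re (ip x x) - Re (ip x y) ^+ 2 / Re (ip y y).
  by rewrite /t; field; rewrite gt_eqF.
by rewrite subr_ge0 ler_pdivrMr.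
Qed.

Lemma ipangle_cos_itv x y : x != 0 -> y != 0 ->
  Re (ip x y) / (ipnorm ip x * ipnorm ip y) \in `[-1, 1].
Proof.
move=> x0 y0; have nxy := mulr_gt0 (ipnorm_gt0 x0) (ipnorm_gt0 y0).
rewrite in_itv /= -ler_norml normrM normfV (gtr0_norm nxy) ler_pdivrMr // mul1r.
rewrite /ipnorm -sqrtrM ?Re_ip_diag_ge0 // -sqrtr_sqr ler_wsqrtr //.
exact: Re_ip_CauchySchwarz.
Qed.

Lemma cos_ipangle x y : x != 0 -> y != 0 ->
  cos (ipangle ip x y) = Re (ip x y) / (ipnorm ip x * ipnorm ip y).
Proof. by move=> x0 y0; rewrite acosK ?ipangle_cos_itv. Qed.

Lemma Re_ip_sqr_ipangle x y : x != 0 -> y != 0 ->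
  Re (ip x y) ^+ 2 = cos (ipangle ip x y) ^+ 2 * Re (ip x x) * Re (ip y y).
Proof.
move=> x0 y0; rewrite cos_ipangle // expr_div_n !exprMn !ipnorm_sqr -mulrA.
by rewrite divfK // mulf_neq0 // gt_eqF // Re_ip_diag_gt0.
Qed.

Definition ip_tilt (th e : R) (x y : V) : V :=
  ((cos th * ipnorm ip y)%:C)%C *: x + ((e * sin th * ipnorm ip x)%:C)%C *: y.

Section Tilt.
Variables (th e : R) (x y : V).
Hypotheses (e2 : e ^+ 2 = 1) (x0 : x != 0) (y0 : y != 0) (xy0 : Re (ip x y) = 0).

Lemma Re_ip_tilt : Re (ip x (ip_tilt th e x y)) = cos th * ipnorm ip y * ipnorm ip x ^+ 2.
Proof. by rewrite !Re_ipE xy0 mulr0 addr0 ipnorm_sqr. Qed.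

Lemma Re_ip_tilt_tilt :
  Re (ip (ip_tilt th e x y) (ip_tilt th e x y)) = (ipnorm ip x * ipnorm ip y) ^+ 2.
Proof.
rewrite !Re_ipE (Re_ip_sym x y) xy0 -!ipnorm_sqr.
transitivity ((cos th ^+ 2 + e ^+ 2 * sin th ^+ 2) * (ipnorm ip x * ipnorm ip y) ^+ 2).
  by ring.
by rewrite e2 mul1r cos2Dsin2 mul1r.
Qed.

Lemma ipnorm_tilt : ipnorm ip (ip_tilt th e x y) = ipnorm ip x * ipnorm ip y.
Proof.
rewrite /ipnorm Re_ip_tilt_tilt sqrtr_sqr gtr0_norm //.
by rewrite mulr_gt0 ?ipnorm_gt0.
Qed.

Lemma ip_tilt_neq0 : ip_tilt th e x y != 0.
Proof.
apply: contraTneq (mulr_gt0 (ipnorm_gt0 x0) (ipnorm_gt0 y0)) => t0.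
by rewrite -ipnorm_tilt t0 /ipnorm ip0l sqrtr0 ltxx.
Qed.

Lemma ipangle_tilt : th \in `[0, pi] -> ipangle ip x (ip_tilt th e x y) = th.
Proof.
move=> thr; have nx := ipnorm_gt0 x0; have ny := ipnorm_gt0 y0.
rewrite /ipangle Re_ip_tilt ipnorm_tilt.
have -> : cos th * ipnorm ip y * ipnorm ip x ^+ 2 /
  (ipnorm ip x * (ipnorm ip x * ipnorm ip y)) = cos th by field; rewrite !gt_eqF.
exact: cosK.
Qed.

End Tilt.
End InnerProduct.

Lemma tilt_equations_eq0 (R : realFieldType) (k s al be a b c : R) :
  k ^+ 2 + s ^+ 2 = 1 -> 0 < s -> 0 < al -> 0 < be -> 0 < a ->
  (forall e, e ^+ 2 = 1 -> (k * be * a + e * s * al * c) ^+ 2 =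
     k ^+ 2 * a * ((k * be) ^+ 2 * a + 2 * (k * be) * (e * s * al) * c
                   + (e * s * al) ^+ 2 * b)) ->
  c = 0.
Proof.
move=> ks s0 al0 be0 a0 eqs.
have eqP1 := eqs 1 (expr1n _ _).
have eqN1 := eqs (-1) (etrans (sqrrN _) (expr1n _ _)).
(* Subtracting the [e = -1] equation from the [e = 1] one leaves
   [4 k c be a s al (1 - k^2) = 0]. *)
have s2 : s ^+ 2 = 1 - k ^+ 2 by lra.
have nz : 4 * be * a * s * al * s ^+ 2 != 0 by rewrite !mulf_neq0 ?gt_eqF ?exprn_gt0.
have : k * c = 0 by apply: (mulIf nz); rewrite mul0r s2; lra.
move/eqP; rewrite mulf_eq0 => /orP[/eqP k0|/eqP //].
move: eqP1; rewrite k0 !(mul0r, mulr0, expr0n, add0r, addr0) /= mul1r => /eqP.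
by rewrite sqrf_eq0 !mulf_eq0 (gt_eqF s0) (gt_eqF al0) => /eqP.
Qed.

Section TwoInnerProducts.
Variables (R : realType) (V : lmodType R[i]) (ip1 ip2 : V -> V -> R[i]).
Hypotheses (ip1_inner : is_inner_product ip1) (ip2_inner : is_inner_product ip2).

Definition orth_preserving := forall x y : V, ip1 x y = 0 -> ip2 x y = 0.

Definition Re_orth_preserving := forall x y : V, x != 0 -> y != 0 ->
  Re (ip1 x y) = 0 -> Re (ip2 x y) = 0.

Lemma orth_preserving_of_Re : Re_orth_preserving -> orth_preserving.
Proof.
move=> keep x y xy0.
have [->|x0] := eqVneq x 0; first by rewrite (ip0l ip2_inner).
have [->|y0] := eqVneq y 0; first by rewrite (ip0r ip2_inner).
have iy0 : 'i%C *: y != 0 by rewrite scaler_eq0 negb_or y0 andbT eq_complex /= oner_eq0 andbF.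
have Re0 : Re (ip2 x y) = 0 by apply: keep => //; rewrite xy0.
have := keep x ('i%C *: y) x0 iy0; rewrite (ipZr ip1_inner) (ipZr ip2_inner) xy0 mulr0.
move=> /(_ erefl); move: Re0; case: (ip2 x y) => a b /= -> Im0.
by apply/eqP; rewrite eq_complex /= eqxx /=; apply/eqP; lra.
Qed.

Lemma Re_orth_preserving_of_ipnorm_scale (c : R) :
  (forall x, ipnorm ip2 x = c * ipnorm ip1 x) -> Re_orth_preserving.
Proof.
move=> scale x y _ _ xy0.
have Re_diag z : Re (ip2 z z) = c ^+ 2 * Re (ip1 z z).
  by rewrite -(ipnorm_sqr ip1_inner) -(ipnorm_sqr ip2_inner) scale exprMn.
rewrite (Re_ip_polarization ip2_inner) !Re_diag -!mulrBr -mulrA.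
by rewrite -(Re_ip_polarization ip1_inner) xy0 mulr0.
Qed.

Lemma Re_orth_preserving_of_ipangle_eq :
  (forall x y, x != 0 -> y != 0 -> ipangle ip1 x y = ipangle ip2 x y) ->
  Re_orth_preserving.
Proof.
move=> eq_angle x y x0 y0 xy0; have := congr1 cos (eq_angle x y x0 y0).
rewrite !cos_ipangle // xy0 mul0r => /esym/eqP.
by rewrite mulf_eq0 invr_eq0 mulf_eq0 !(gt_eqF (ipnorm_gt0 _ _)) //= orbF => /eqP.
Qed.

Lemma Re_orth_preserving_of_ipangle_preserved (th : R) : 0 < th < pi ->
  (forall x y, x != 0 -> y != 0 -> ipangle ip1 x y = th -> ipangle ip2 x y = th) ->
  Re_orth_preserving.
Proof.
move=> thr keep x y x0 y0 xy0.
have th_itv : th \in `[0, pi] by rewrite in_itv /= !ltW //; case/andP: thr.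
apply: (@tilt_equations_eq0 _ (cos th) (sin th) (ipnorm ip1 x) (ipnorm ip1 y)
  (Re (ip2 x x)) (Re (ip2 y y))).
- exact: cos2Dsin2.
- exact: sin_gt0_pi.
- exact: ipnorm_gt0.
- exact: ipnorm_gt0.
- exact: Re_ip_diag_gt0.
move=> e e2; set u := ip_tilt ip1 th e x y.
have u0 : u != 0 by apply: ip_tilt_neq0.
have := Re_ip_sqr_ipangle ip2_inner x0 u0.
rewrite (keep x u x0 u0 (ipangle_tilt ip1_inner e2 x0 y0 xy0 th_itv)).
by rewrite /u !(Re_ipE ip2_inner) (Re_ip_sym ip2_inner x y) => ->; ring.
Qed.

Section Proportional.
Hypothesis orth : orth_preserving.

Definition ip_ratio x := ip2 x x / ip1 x x.

Lemma ip_ratioP x y : x != 0 -> ip2 y x = ip_ratio x * ip1 y x.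
Proof.
move=> x0; have xx0 := ip_diag_neq0 ip1_inner x0.
pose c := ip1 y x / ip1 x x.
have : ip1 ((- c) *: x + y) x = 0 by rewrite (ipZDl ip1_inner) /c; field.
move/orth; rewrite (ipZDl ip2_inner) mulNr addrC => /eqP; rewrite subr_eq0 => /eqP ->.
by rewrite /ip_ratio /c; field.
Qed.

Lemma ip_ratio_real x : conjc (ip_ratio x) = ip_ratio x.
Proof.
by rewrite /ip_ratio (ip_diag_real ip1_inner) (ip_diag_real ip2_inner) -fmorph_div conjc_real.
Qed.

Lemma ip_ratio_eq x y : ip1 x y != 0 -> ip_ratio x = ip_ratio y.
Proof.
move=> xy0.
have x0 : x != 0 by apply: contraNneq xy0 => ->; rewrite (ip0l ip1_inner).
have y0 : y != 0 by apply: contraNneq xy0 => ->; rewrite (ip0r ip1_inner).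
apply: (mulIf xy0); rewrite -(ip_ratioP x y0) (ip_conj ip2_inner) (ip_ratioP y x0).
by rewrite conjcM ip_ratio_real -(ip_conj ip1_inner).
Qed.

Lemma ip_ratio_const x z : x != 0 -> z != 0 -> ip_ratio x = ip_ratio z.
Proof.
move=> x0 z0; have [xz0|] := eqVneq (ip1 x z) 0; last exact: ip_ratio_eq.
have zx0 : ip1 z x = 0 by rewrite (ip_conj ip1_inner) xz0 conjc0.
rewrite (@ip_ratio_eq x (x + z)); last by rewrite (ipDr ip1_inner) xz0 addr0 ip_diag_neq0.
by rewrite (@ip_ratio_eq z (x + z)) // (ipDr ip1_inner) zx0 add0r ip_diag_neq0.
Qed.

Lemma ip_proportional x0 : x0 != 0 -> forall x y, ip2 x y = ip_ratio x0 * ip1 x y.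
Proof.
move=> nx0 x y; have [->|y0] := eqVneq y 0.
  by rewrite (ip0r ip1_inner) (ip0r ip2_inner) mulr0.
by rewrite (ip_ratioP x y0) (ip_ratio_const y0 nx0).
Qed.

End Proportional.

Lemma ip_eq_of_orth_preserving : orth_preserving ->
  (exists x : V, x != 0 /\ ipnorm ip1 x = ipnorm ip2 x) ->
  forall x y, ip1 x y = ip2 x y.
Proof.
move=> orth [x0 [nx0 eq_norm]] x y.
have ratio1 : ip_ratio x0 = 1.
  have eq_diag : Re (ip1 x0 x0) = Re (ip2 x0 x0).
    by rewrite -(ipnorm_sqr ip1_inner) -(ipnorm_sqr ip2_inner) eq_norm.
  rewrite /ip_ratio (ip_diag_real ip1_inner) eq_diag -(ip_diag_real ip2_inner).
  by rewrite divff // ip_diag_neq0.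
by rewrite (ip_proportional orth nx0) ratio1 mul1r.
Qed.

End TwoInnerProducts.

Theorem mainTheorem11 (R : realType) (V : lmodType R[i]) (ip1 ip2 : V -> V -> R[i])
  (h1 : is_inner_product ip1) (h2 : is_inner_product ip2) :
  ((exists c : R, 0 < c /\ forall x y : V, ip2 x y = (c%:C)%C * ip1 x y) \/
   (exists c : R, 0 < c /\ forall x : V, ipnorm ip2 x = c * ipnorm ip1 x) \/
   (forall x y : V, x != 0 -> y != 0 -> ipangle ip1 x y = ipangle ip2 x y) \/
   (forall x y : V, x != 0 -> y != 0 ->
      (complex.Re (ip1 x y) = 0 <-> complex.Re (ip2 x y) = 0)) \/
   (forall x y : V, ip1 x y = 0 <-> ip2 x y = 0) \/
   (exists theta0 : R, 0 < theta0 < pi /\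
      forall x y : V, x != 0 -> y != 0 ->
        (ipangle ip1 x y = theta0 <-> ipangle ip2 x y = theta0))) ->
  (exists x : V, x != 0 /\ ipnorm ip1 x = ipnorm ip2 x) ->
  forall x y : V, ip1 x y = ip2 x y.
Proof.
move=> hyp; apply: (ip_eq_of_orth_preserving h1 h2).
case: hyp => [[c [_ prop]] x y xy0|[[c [_ scale]]|[eq_angle|[eq_Re|[eq_orth|[th [thr eq_th]]]]]]].
- by rewrite prop xy0 mulr0.
- exact/(orth_preserving_of_Re h1 h2)/(Re_orth_preserving_of_ipnorm_scale h1 h2 scale).
- exact/(orth_preserving_of_Re h1 h2)/(Re_orth_preserving_of_ipangle_eq h1 h2 eq_angle).
- by apply: (orth_preserving_of_Re h1 h2) => x y x0 y0 /(eq_Re x y x0 y0).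
- by move=> x y /eq_orth.
- apply/(orth_preserving_of_Re h1 h2)/(Re_orth_preserving_of_ipangle_preserved h1 h2 thr).
  by move=> x y x0 y0 /(eq_th x y x0 y0).
Qed.
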